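(* Let $\preceq$ be a topological orientation on $\mathbb{R}$ (with the metric $d(x,y)=|x-y|$) such that $x\preceq y$ implies $x\le y$. Assume every left-bounded pair for $\preceq$ has a meet in $\mathbb{R}$. Then $(\mathbb{R},\preceq)$ is a cc sponge.
   Context: An orientation is a reflexive, antisymmetric binary relation; it is topological if it is a closed subset of $\mathbb{R}\times\mathbb{R}$. A set $P$ is left-bounded if some $s$ satisfies $s\preceq p$ for all $p\in P$, right-bounded if some $s$ satisfies $p\preceq s$ for all $p\in P$. The meet of $P$ is an $x$ with $x\preceq p$ for all $p\in P$ and $y\preceq x$ for every $y$ with $y\preceq p$ for all $p\in P$; the join is dual. $(\mathbb{R},\preceq)$ is a cc sponge if every nonempty right-bounded subset has a join. *)

From HB Require Import structures.
From mathcomp Require Import all_boot all_order all_algebra.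
From mathcomp Require Import all_classical all_reals all_analysis.
From mathcomp Require Import Rstruct Rstruct_topology.
From Stdlib Require Import Reals.

Set Implicit Arguments.
Unset Strict Implicit.
Unset Printing Implicit Defensive.

Local Open Scope classical_set_scope.

Definition Rreal := Rdefinitions.R.

Definition orientation (le : Rreal -> Rreal -> Prop) : Prop :=
  (forall x, le x x) /\ (forall x y, le x y -> le y x -> x = y).

Definition topological (le : Rreal -> Rreal -> Prop) : Prop :=
  closed [set p : Rreal * Rreal | le p.1 p.2].

Definition left_bounded (le : Rreal -> Rreal -> Prop) (P : set Rreal) : Prop :=
  exists s, forall p, P p -> le s p.

Definition right_bounded (le : Rreal -> Rreal -> Prop) (P : set Rreal) : Prop :=
  exists s, forall p, P p -> le p s.

Definition is_meet (le : Rreal -> Rreal -> Prop) (P : set Rreal) (x : Rreal) : Prop :=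
  (forall p, P p -> le x p) /\
  (forall y, (forall p, P p -> le y p) -> le y x).

Definition is_join (le : Rreal -> Rreal -> Prop) (P : set Rreal) (x : Rreal) : Prop :=
  (forall p, P p -> le p x) /\
  (forall y, (forall p, P p -> le p y) -> le x y).

Definition cc_sponge (le : Rreal -> Rreal -> Prop) : Prop :=
  forall P : set Rreal, P !=set0 -> right_bounded le P -> exists x, is_join le P x.

(** The ⪯-upper bounds of a nonempty, right-bounded set P form a closed set U
    (the orientation is closed) which is bounded below in the usual order by
    any element of P (since ⪯ refines ≤); so U contains its infimum c.  For
    any other upper bound y, the pair {c, y} is left-bounded by P, and its meet
    m is again an upper bound of P, whence c ≤ m; but m ⪯ c gives m ≤ c, so
    m = c ⪯ y and c is the join of P. *)
From mathcomp Require Import all_boot all_order all_algebra.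
From mathcomp Require Import all_classical all_reals all_analysis.
From mathcomp Require Import Rstruct Rstruct_topology.
From Stdlib Require Import Reals.
Import Order.TTheory GRing.Theory Num.Theory numFieldNormedType.Exports.
Local Open Scope classical_set_scope.
Local Open Scope ring_scope.

Lemma closed_inf_mem (R : realType) (A : set R) :
  closed A -> A !=set0 -> has_lbound A -> A (inf A).
Proof.
move=> clA A0 A_lb; apply: clA => B /nbhs_ballP[e e_gt0 inf_eB].
have [u Au u_lt] := inf_adherent e_gt0 (conj A0 A_lb).
exists u; split=> //; apply: inf_eB.
have inf_le_u : inf A <= u by exact: ge_inf.
by rewrite /ball /= distrC ger0_norm ?subr_ge0 // ltrBlDl.
Qed.

Definition upper_bounds (le : Rreal -> Rreal -> Prop) (P : set Rreal) :
  set Rreal := [set u | forall p, P p -> le p u].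

Lemma closed_le_section (le : Rreal -> Rreal -> Prop) (p : Rreal) :
  topological le -> closed [set u | le p u].
Proof.
move=> le_closed; apply: (@preimage_closed _ _ (pair p)) le_closed => u _.
exact: (cvg_pair (cvg_cst p) cvg_id).
Qed.

Lemma closed_upper_bounds (le : Rreal -> Rreal -> Prop) (P : set Rreal) :
  topological le -> closed (upper_bounds le P).
Proof.
by move=> le_closed; apply: closed_bigI => p _; exact: closed_le_section.
Qed.

Section MinimalUpperBound.

Variable le : Rreal -> Rreal -> Prop.
Hypothesis le_Rle : forall x y, le x y -> Rle x y.
Hypothesis pair_meet : forall a b, left_bounded le [set a; b] ->
  exists m, is_meet le [set a; b] m.

Lemma le_ler x y : le x y -> x <= y.
Proof. by move/le_Rle/RleP. Qed.

Lemma upper_bounds_lbound (P : set Rreal) p :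
  P p -> lbound (upper_bounds le P) p.
Proof. by move=> Pp u Uu; apply: le_ler; exact: Uu. Qed.

Lemma min_upper_bound_is_join (P : set Rreal) c :
  P !=set0 -> upper_bounds le P c -> lbound (upper_bounds le P) c ->
  is_join le P c.
Proof.
move=> [p0 Pp0] Uc c_min; split=> // y Uy.
have [m [m_lb m_glb]] : exists m, is_meet le [set c; y] m.
  by apply: pair_meet; exists p0 => q [->|->]; [exact: Uc | exact: Uy].
have Um : upper_bounds le P m.
  by move=> p Pp; apply: m_glb => q [->|->]; [exact: Uc | exact: Uy].
have -> : c = m.
  by apply/eqP; rewrite eq_le c_min //= le_ler //; apply: m_lb; left.
by apply: m_lb; right.
Qed.

End MinimalUpperBound.

Theorem mainTheorem5 (le : Rreal -> Rreal -> Prop) :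
  orientation le ->
  topological le ->
  (forall x y : Rreal, le x y -> Rle x y) ->
  (forall a b : Rreal, left_bounded le [set a; b] ->
     exists m, is_meet le [set a; b] m) ->
  cc_sponge le.
Proof.
move=> _ le_closed le_Rle pair_meet P [p0 Pp0] [s Ps].
set U := upper_bounds le P.
have U_lb : has_lbound U by exists p0; exact: upper_bounds_lbound.
exists (inf U); apply: min_upper_bound_is_join => //; first by exists p0.
- by apply: closed_inf_mem => //; [exact: closed_upper_bounds | exists s].
- by move=> u Uu; exact: ge_inf.
Qed.
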